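(* Let $\mathbf{G}\in\mathbb{C}^{N_s\times N_t}$, $\mathbf{U}_k\in\mathbb{C}^{N_r\times N_s}$, $\mathbf{D}_k\in\mathbb{C}^{N_r\times N_t}$ for $k=1,\dots,K$, let $\mathbf{W}_k\in\mathbb{C}^{N_t\times N_d}$ be fixed, $\sigma_0^2>0$, and weights $\omega_k$. For $\boldsymbol{\theta}\in\mathbb{C}^{N_s}$ let $\mathbf{H}_k(\boldsymbol{\theta})=\mathbf{D}_k+\mathbf{U}_k\mathrm{diag}(\boldsymbol{\theta})\mathbf{G}$, $\bar{\mathbf{W}}=\sum_{j=1}^K\mathbf{W}_j\mathbf{W}_j^{\mathsf H}$, $\bar{\mathbf{W}}_k=\sum_{j\neq k}\mathbf{W}_j\mathbf{W}_j^{\mathsf H}$, and $$R(\boldsymbol{\theta})=\sum_{k=1}^K\omega_k\Big[\log\det(\sigma_0^2\mathbf{I}+\mathbf{H}_k\bar{\mathbf{W}}\mathbf{H}_k^{\mathsf H})-\log\det(\sigma_0^2\mathbf{I}+\mathbf{H}_k\bar{\mathbf{W}}_k\mathbf{H}_k^{\mathsf H})\Big],$$ with $\mathbf{H}_k=\mathbf{H}_k(\boldsymbol{\theta})$. Then $$\nabla_{\boldsymbol{\theta}}R(\boldsymbol{\theta})=\sum_{k=1}^K\omega_k\Big(\mathrm{vecd}\big(\mathbf{U}_k^{\mathsf H}(\mathbf{H}_k\bar{\mathbf{W}}\mathbf{H}_k^{\mathsf H}+\sigma_0^2\mathbf{I})^{-1}\mathbf{H}_k\bar{\mathbf{W}}\mathbf{G}^{\mathsf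 H}\big)-\mathrm{vecd}\big(\mathbf{U}_k^{\mathsf H}(\mathbf{H}_k\bar{\mathbf{W}}_k\mathbf{H}_k^{\mathsf H}+\sigma_0^2\mathbf{I})^{-1}\mathbf{H}_k\bar{\mathbf{W}}_k\mathbf{G}^{\mathsf H}\big)\Big).$$
   Context: $\mathrm{diag}(\boldsymbol{\theta})$ is the diagonal matrix with diagonal $\boldsymbol{\theta}$; $\mathrm{vecd}(\mathbf{X})$ is the vector of diagonal entries of a square matrix $\mathbf{X}$; $\log$ is the natural logarithm. The complex-valued gradient of a real function $f$ is $\nabla_{\boldsymbol{\theta}}f=\frac12\big(\frac{\partial f}{\partial\Re\{\boldsymbol{\theta}\}}+j\frac{\partial f}{\partial\Im\{\boldsymbol{\theta}\}}\big)$. $R$ is the weighted sum rate of an RIS-aided downlink multiuser MIMO system with RIS phase-shift vector $\boldsymbol{\theta}$ and fixed precoders. *)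

From HB Require Import structures.
From mathcomp Require Import all_boot all_order all_algebra.
From mathcomp Require Import complex.
From mathcomp Require Import all_classical all_reals all_analysis.
Set Implicit Arguments. Unset Strict Implicit. Unset Printing Implicit Defensive.
Import Order.TTheory GRing.Theory Num.Theory.
Local Open Scope ring_scope.

Definition ctrmx {R : rcfType} m n (A : 'M[R[i]]_(m, n)) : 'M[R[i]]_(n, m) :=
  (map_mx (@conjc R) A)^T.

Definition diagv {R : rcfType} n (th : 'cV[R[i]]_n) : 'M[R[i]]_n := diag_mx th^T.

Definition vecd {R : rcfType} n (X : 'M[R[i]]_n) : 'cV[R[i]]_n := \col_i X i i.

Definition Hk {R : rcfType} Nr Ns Nt (D : 'M[R[i]]_(Nr, Nt)) (U : 'M[R[i]]_(Nr, Ns))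
  (G : 'M[R[i]]_(Ns, Nt)) (th : 'cV[R[i]]_Ns) : 'M[R[i]]_(Nr, Nt) :=
  D + U *m diagv th *m G.

Definition Wbar {R : rcfType} K Nt Nd (W : 'I_K -> 'M[R[i]]_(Nt, Nd)) : 'M[R[i]]_Nt :=
  \sum_(j < K) W j *m ctrmx (W j).

Definition Wbark {R : rcfType} K Nt Nd (W : 'I_K -> 'M[R[i]]_(Nt, Nd)) (k : 'I_K) : 'M[R[i]]_Nt :=
  \sum_(j < K | j != k) W j *m ctrmx (W j).

(* log det of a Hermitian positive-definite matrix (whose determinant is a
   positive real): natural log of the (real) determinant. *)
Definition logdet {R : realType} n (A : 'M[R[i]]_n) : R := ln (complex.Re (\det A)).

Definition WSR {R : realType} K Nr Ns Nt Nd (G : 'M[R[i]]_(Ns, Nt))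
  (U : 'I_K -> 'M[R[i]]_(Nr, Ns)) (D : 'I_K -> 'M[R[i]]_(Nr, Nt))
  (W : 'I_K -> 'M[R[i]]_(Nt, Nd)) (sigma2 : R) (omega : 'I_K -> R)
  (th : 'cV[R[i]]_Ns) : R :=
  \sum_(k < K)
    omega k * (logdet ((sigma2%:C)%C%:M + Hk (D k) (U k) G th *m Wbar W *m ctrmx (Hk (D k) (U k) G th))
             - logdet ((sigma2%:C)%C%:M + Hk (D k) (U k) G th *m Wbark W k *m ctrmx (Hk (D k) (U k) G th))).

Definition ecv {R : rcfType} n (i : 'I_n) : 'cV[R[i]]_n := \col_j (if j == i then 1 else 0).

Definition dRe {R : realType} n (f : 'cV[R[i]]_n -> R) (th : 'cV[R[i]]_n) (i : 'I_n) : R ->  R :=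
  fun t => f (th + (t%:C)%C *: ecv i).
Definition dIm {R : realType} n (f : 'cV[R[i]]_n -> R) (th : 'cV[R[i]]_n) (i : 'I_n) : R ->  R :=
  fun t => f (th + ((t%:C)%C * 'i%C) *: ecv i).

(* Everything reduces to the directional derivatives of
   t |-> log det (s I + H(t) S H(t)^H) along lines H(t) = H + t E with E = U diag(v) G.
   For real t, det (A + t B + t^2 C) is a polynomial whose linear coefficient is
   det A * tr (A^-1 B), so the derivative at 0 of its logarithm is Re tr (A^-1 B).
   Here A = s I + H S H^H is Hermitian with positive real determinant: the real
   polynomial r |-> det (s I + r H S H^H) is positive at 0 and has no root on [0, 1].
   The two first-order terms of B = E S H^H + H S E^H are conjugate, which gives
   2 Re tr (A^-1 H S E^H) = 2 Re (conj c * (U^H A^-1 H S G^H)_ii) in the direction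
   v = c e_i; c = 1 and c = i produce twice the real and the imaginary part of the
   claimed gradient entry. *)

From HB Require Import structures.
From mathcomp Require Import all_boot all_order all_algebra.
From mathcomp Require Import complex.
From mathcomp Require Import all_classical all_reals all_analysis.
From mathcomp Require Import ring lra.
From mathcomp Require Import fingroup perm.
Import Order.TTheory GRing.Theory Num.Theory.
Local Open Scope ring_scope.

Set Implicit Arguments.
Unset Strict Implicit.
Unset Printing Implicit Defensive.

Lemma coef01_prod1X (F : comNzRingType) (I : finType) (q : I -> {poly F}) :
  (\prod_i (1 + 'X * q i))`_0 = 1 /\ (\prod_i (1 + 'X * q i))`_1 = \sum_i (q i)`_0.
Proof.
apply: (big_ind2 (fun (p : {poly F}) (c : F) => p`_0 = 1 /\ p`_1 = c)).
- by split; rewrite coef1.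
- move=> p c p' c' [p0 p1] [p'0 p'1]; split; first by rewrite coefM big_ord1 p0 p'0 mulr1.
  by rewrite coefM big_ord_recr big_ord1 /= p0 p'0 p1 p'1 mul1r mulr1 addrC.
- by move=> j _; rewrite !(coefD, coef1, coefXM) /= addr0 add0r.
Qed.

Lemma coef1_det1X (F : comNzRingType) n (N : 'M[{poly F}]_n) :
  (\det (1%:M + 'X *: N))`_1 = \sum_i (N i i)`_0.
Proof.
set M := 1%:M + 'X *: N.
have M_offdiag i j : i != j -> M i j = 'X * N i j.
  by move=> /negbTE ne_ij; rewrite !mxE ne_ij mulr0n add0r.
rewrite /determinant (bigD1 (1%g : {perm 'I_n})) //= coefD coef_sum [X in _ + X]big1 ?addr0.
  rewrite odd_perm1 expr0 mul1r.
  under eq_bigr => i _ do rewrite perm1 !mxE eqxx mulr1n.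
  by case: (coef01_prod1X (fun i => N i i)).
move=> s s_neq1.
have [i0 moved_i0] : exists i0, s i0 != i0.
  apply/existsP; apply: contraR s_neq1 => /existsPn fix_s.
  by apply/eqP/permP => x; rewrite perm1; apply/eqP/negPn/fix_s.
(* A non-identity permutation moves at least two indices, so its term is divisible by 'X^2. *)
have moved_si0 : s (s i0) != s i0 by rewrite (inj_eq perm_inj).
rewrite (bigD1 i0) // (bigD1 (s i0)) //= !M_offdiag 1?eq_sym //.
move: (N i0 (s i0)) (N (s i0) (s (s i0))) (\prod_(i | _) _) ((-1) ^+ s) => a b c d.
have -> : d * ('X * a * ('X * b * c)) = 'X^2 * (d * (a * b * c)) by rewrite expr2; ring.
by rewrite coefXnM.
Qed.

Section QuadraticPencil.
Variables (F : comNzRingType) (n : nat).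

Definition quad_pencil (A B C : 'M[F]_n) : 'M[{poly F}]_n :=
  map_mx polyC A + 'X *: map_mx polyC B + 'X^2 *: map_mx polyC C.

Lemma horner_det_quad_pencil (A B C : 'M[F]_n) (x : F) :
  (\det (quad_pencil A B C)).[x] = \det (A + x *: B + x ^+ 2 *: C).
Proof.
rewrite -[LHS]/(horner_eval x _) -det_map_mx; congr (\det _).
by apply/matrixP => i j; rewrite !mxE /= /horner_eval !hornerE.
Qed.

End QuadraticPencil.

Lemma coef1_det_quad_pencil (F : fieldType) n (A B C : 'M[F]_n) : A \in unitmx ->
  (\det (quad_pencil A B C))`_1 = \det A * \tr (invmx A *m B).
Proof.
move=> A_unit.
set N := map_mx polyC (invmx A *m B) + 'X *: map_mx polyC (invmx A *m C).
have -> : quad_pencil A B C = map_mx polyC A *m (1%:M + 'X *: N).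
  rewrite mulmxDr mulmx1 /N scalerDr mulmxDr -!scalemxAr -!map_mxM !mulmxA.
  by rewrite mulmxV // !mul1mx scalerA -expr2 addrA.
rewrite det_mulmx det_map_mx coefCM coef1_det1X; congr (_ * _).
by apply: eq_bigr => i _; rewrite !mxE coefD coefC coefXM addr0.
Qed.

(* [Num.Theory] exports its own [Re] and [Im] for numeric closed fields. *)
Local Notation Re := complex.Re.
Local Notation Im := complex.Im.

Section ComplexParts.
Variable R : rcfType.
Local Open Scope complex_scope.

Lemma Re_realM (r : R) (z : R[i]) : Re (r%:C * z) = r * Re z.
Proof. by case: z => a b /=; rewrite mul0r subr0. Qed.

Lemma ReB (a b : R[i]) : Re (a - b) = Re a - Re b.
Proof. by case: a; case: b. Qed.

Lemma Re_conjc (z : R[i]) : Re (conjc z) = Re z.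
Proof. by case: z. Qed.

Lemma Re_conjci_mul (z : R[i]) : Re (conjc 'i * z) = Im z.
Proof. by case: z => a b /=; rewrite mul0r mulN1r sub0r opprK. Qed.

Lemma conjc_fix_real (z : R[i]) : conjc z = z -> z = (Re z)%:C.
Proof. by case: z => a b [] b_eq; congr (_ +i* _); lra. Qed.

Lemma horner_map_Re (p : {poly R[i]}) (t : R) :
  (map_poly (@complex.Re R) p).[t] = Re p.[t%:C].
Proof.
rewrite (@horner_coef_wide _ (size p)) ?size_poly // horner_coef raddf_sum.
apply: eq_bigr => j _; rewrite coef_map -rmorphXn.
by case: p`_j => a b /=; rewrite mulr0 subr0.
Qed.

Lemma wirtinger_combination (z : R[i]) :
  (2^-1)%:C * ((2 * Re z)%:C + 'i * (2 * Im z)%:C) = z.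
Proof.
rewrite {3}(complexE z) !rmorphM /= fmorphV /= rmorph_nat mulrCA -mulrDr mulKf // pnatr_eq0.
Qed.

End ComplexParts.

Section ConjugateTranspose.
Variable R : rcfType.
Local Open Scope complex_scope.

Lemma ctrmxM m n p (A : 'M[R[i]]_(m, n)) (B : 'M[R[i]]_(n, p)) :
  ctrmx (A *m B) = ctrmx B *m ctrmx A.
Proof. by rewrite /ctrmx map_mxM trmx_mul. Qed.

Lemma ctrmxD m n (A B : 'M[R[i]]_(m, n)) : ctrmx (A + B) = ctrmx A + ctrmx B.
Proof. by rewrite /ctrmx map_mxD linearD. Qed.

Lemma ctrmxZ m n a (A : 'M[R[i]]_(m, n)) : ctrmx (a *: A) = conjc a *: ctrmx A.
Proof. by rewrite /ctrmx map_mxZ linearZ. Qed.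

Lemma ctrmxK m n (A : 'M[R[i]]_(m, n)) : ctrmx (ctrmx A) = A.
Proof.
rewrite /ctrmx map_trmx trmxK -map_mx_comp map_mx_id //.
exact: conjcK.
Qed.

Lemma ctrmx_sum m n (I : Type) (r : seq I) (P : pred I) (F : I -> 'M[R[i]]_(m, n)) :
  ctrmx (\sum_(j <- r | P j) F j) = \sum_(j <- r | P j) ctrmx (F j).
Proof.
apply: (big_morph _ (@ctrmxD m n)).
by rewrite /ctrmx map_mx0 trmx0.
Qed.

Lemma ctrmx_scalar n a : ctrmx (a%:M : 'M[R[i]]_n) = (conjc a)%:M.
Proof. by rewrite /ctrmx map_scalar_mx tr_scalar_mx. Qed.

Lemma ctrmx_inv n (A : 'M[R[i]]_n) : ctrmx (invmx A) = invmx (ctrmx A).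
Proof. by rewrite /ctrmx map_invmx trmx_inv. Qed.

Lemma det_ctrmx n (A : 'M[R[i]]_n) : \det (ctrmx A) = conjc (\det A).
Proof. by rewrite /ctrmx det_tr det_map_mx. Qed.

Lemma mxtrace_ctrmx n (A : 'M[R[i]]_n) : \tr (ctrmx A) = conjc (\tr A).
Proof. by rewrite /ctrmx mxtrace_tr /mxtrace rmorph_sum; apply: eq_bigr => j _; rewrite mxE. Qed.

Lemma ctrmx_sum_gram d n (I : Type) (r : seq I) (P : pred I) (W : I -> 'M[R[i]]_(n, d)) :
  ctrmx (\sum_(j <- r | P j) W j *m ctrmx (W j)) = \sum_(j <- r | P j) W j *m ctrmx (W j).
Proof. by rewrite ctrmx_sum; apply: eq_bigr => j _; rewrite ctrmxM ctrmxK. Qed.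

Lemma ctrmx_diagv n (v : 'cV[R[i]]_n) : ctrmx (diagv v) = diagv (map_mx conjc v).
Proof.
apply/matrixP => j k; rewrite !mxE eq_sym.
by case: eqVneq => [->|_]; rewrite ?mulr1n ?mulr0n ?conjc0.
Qed.

Lemma gram_line_expand m n (S : 'M[R[i]]_m) (H E : 'M[R[i]]_(m, n)) (Wb : 'M[R[i]]_n) (t : R) :
  S + (H + t%:C *: E) *m Wb *m ctrmx (H + t%:C *: E) =
  (S + H *m Wb *m ctrmx H) + t%:C *: (E *m Wb *m ctrmx H + H *m Wb *m ctrmx E)
  + t%:C ^+ 2 *: (E *m Wb *m ctrmx E).
Proof.
rewrite ctrmxD ctrmxZ conjc_real !mulmxDl !mulmxDr -!scalemxAl -!scalemxAr.
by rewrite scalerA -expr2 scalerDr !addrA [_ + t%:C *: (E *m _ *m _)]addrAC.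
Qed.

End ConjugateTranspose.

Section PositiveSemidefinite.
Variable R : rcfType.
Local Open Scope complex_scope.

Definition psdmx n (A : 'M[R[i]]_n) := forall v : 'rV_n, 0 <= (v *m A *m ctrmx v) 0 0.

Lemma gram_entry n (v : 'rV[R[i]]_n) : (v *m ctrmx v) 0 0 = \sum_j v 0 j * conjc (v 0 j).
Proof. by rewrite !mxE; apply: eq_bigr => j _; rewrite !mxE. Qed.

Lemma gram_gt0 n (v : 'rV[R[i]]_n) : v != 0 -> 0 < (v *m ctrmx v) 0 0.
Proof.
move=> v_neq0; rewrite gram_entry lt_def sumr_ge0 ?andbT => [|j _]; last exact: mulcJ_ge0.
apply: contra v_neq0 => /eqP sum0; apply/eqP/rowP => j; rewrite mxE.
have /eqP := psumr_eq0P (fun k _ => mulcJ_ge0 (v 0 k)) sum0 (i := j) isT.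
by rewrite mulf_eq0 conjc_eq0 orbb => /eqP.
Qed.

Lemma psdmx_sum_gram d n (I : Type) (r : seq I) (P : pred I) (W : I -> 'M[R[i]]_(n, d)) :
  psdmx (\sum_(j <- r | P j) W j *m ctrmx (W j)).
Proof.
move=> v; rewrite mulmx_sumr mulmx_suml summxE; apply: sumr_ge0 => j _.
rewrite !mulmxA -mulmxA -ctrmxM gram_entry; apply: sumr_ge0 => k _; exact: mulcJ_ge0.
Qed.

Lemma psdmx_congr m n (H : 'M[R[i]]_(m, n)) (A : 'M[R[i]]_n) :
  psdmx A -> psdmx (H *m A *m ctrmx H).
Proof. by move=> A_psd v; have := A_psd (v *m H); rewrite ctrmxM !mulmxA. Qed.

Lemma det_add_scalar_psd_gt0 n (sig : R) (X : 'M[R[i]]_n) :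
  0 < sig -> ctrmx X = X -> psdmx X -> 0 < \det (sig%:C%:M + X).
Proof.
move=> sig_gt0 X_herm X_psd.
pose M (s : R) := sig%:C%:M + s%:C *: X.
have detM_real s : \det (M s) = (Re (\det (M s)))%:C.
  by apply: conjc_fix_real; rewrite -det_ctrmx ctrmxD ctrmx_scalar ctrmxZ X_herm !conjc_real.
have detM_neq0 s : 0 <= s -> \det (M s) != 0.
  move=> s_ge0; apply/det0P => -[v v_neq0 vM0].
  have : (v *m M s *m ctrmx v) 0 0 = 0 by rewrite vM0 mul0mx mxE.
  rewrite mulmxDr mul_mx_scalar -scalemxAr mulmxDl -!scalemxAl.
  rewrite mxE [X in X + _]mxE [X in _ + X]mxE; apply/eqP.
  by rewrite gt_eqF // ltr_pwDl ?mulr_ge0 ?mulr_gt0 ?ler0c ?ltcR ?gram_gt0.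
(* [s |-> Re (det (M s))] is a real polynomial, positive at 0 and without roots on [0, 1]. *)
pose p := map_poly (@complex.Re R) (\det (quad_pencil (sig%:C%:M) X 0)).
have p_det s : p.[s] = Re (\det (M s)).
  by rewrite horner_map_Re horner_det_quad_pencil scaler0 addr0.
have p0_gt0 : 0 < p.[0].
  rewrite p_det /M scale0r addr0 det_scalar -rmorphXn /=; exact: exprn_gt0.
have p1_gt0 : 0 < p.[1].
  rewrite ltNge; apply/negP => p1_le0.
  have [t /andP[t_ge0 _] /rootP] : exists2 s, 0 <= s <= 1 & root (- p) s.
    by apply: poly_ivt; rewrite ?ler01 // !hornerN oppr_le0 oppr_ge0 p1_le0 ltW.
  rewrite hornerN p_det => /eqP; rewrite oppr_eq0 => /eqP Re_det0.
  by move: (detM_neq0 t t_ge0); rewrite detM_real Re_det0 eqxx.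
have -> : sig%:C%:M + X = M 1 by rewrite /M scale1r.
by rewrite detM_real ltcR -p_det.
Qed.

End PositiveSemidefinite.

Section DiagonalDirections.
Variable R : rcfType.
Local Open Scope complex_scope.

Lemma diagvD n (u v : 'cV[R[i]]_n) : diagv (u + v) = diagv u + diagv v.
Proof. by rewrite /diagv linearD raddfD. Qed.

Lemma diagvZ n c (v : 'cV[R[i]]_n) : diagv (c *: v) = c *: diagv v.
Proof. by apply/matrixP => j k; rewrite !mxE mulrnAr. Qed.

Lemma Hk_shift Nr Ns Nt (D : 'M[R[i]]_(Nr, Nt)) (U : 'M[R[i]]_(Nr, Ns)) (G : 'M[R[i]]_(Ns, Nt))
    (th v : 'cV[R[i]]_Ns) c :
  Hk D U G (th + c *: v) = Hk D U G th + c *: (U *m diagv v *m G).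
Proof. by rewrite /Hk diagvD diagvZ mulmxDr mulmxDl -scalemxAr -scalemxAl addrA. Qed.

Lemma mxtrace_mul_diagv n (Y : 'M[R[i]]_n) (v : 'cV[R[i]]_n) :
  \tr (Y *m diagv v) = \sum_j Y j j * v j 0.
Proof. by rewrite /diagv mul_mx_diag /mxtrace; apply: eq_bigr => j _; rewrite !mxE. Qed.

Lemma mxtrace_mul_ctr_diag_ecv n (Y : 'M[R[i]]_n) c (i : 'I_n) :
  \tr (Y *m ctrmx (diagv (c *: ecv i))) = conjc c * Y i i.
Proof.
rewrite ctrmx_diagv mxtrace_mul_diagv (bigD1 i) //= big1 ?addr0 => [|j /negbTE j_neq_i].
  by rewrite !mxE eqxx mulr1 mulrC.
by rewrite !mxE j_neq_i mulr0 rmorph0 mulr0.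
Qed.

End DiagonalDirections.

Section LogdetDerivative.
Variable R : realType.
Local Open Scope complex_scope.

Lemma is_derive_ln_horner (p : {poly R}) : 0 < p.[0] ->
  is_derive (0 : R) (1 : R) (fun t => ln p.[t]) (p`_1 / p.[0]).
Proof.
move=> p0_gt0.
have := is_derive1_comp (is_derive1_ln p0_gt0) (is_derive_poly p 0).
by rewrite [p^`().[0]]horner_coef0 coef_deriv mulr1n mulrC.
Qed.

Lemma is_derive_logdet_quad n (A B C : 'M[R[i]]_n) : 0 < \det A ->
  is_derive (0 : R) (1 : R) (fun t : R => logdet (A + t%:C *: B + t%:C ^+ 2 *: C))
    (Re (\tr (invmx A *m B))).
Proof.
move=> detA_gt0.
have A_unit : A \in unitmx by rewrite unitmxE unitfE gt_eqF.
have detA_real : \det A = (Re (\det A))%:C by apply/esym/RRe_real/gtr0_real.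
pose p := map_poly (@complex.Re R) (\det (quad_pencil A B C)).
have p_horner t : p.[t] = Re (\det (A + t%:C *: B + t%:C ^+ 2 *: C)).
  by rewrite horner_map_Re horner_det_quad_pencil.
have p0 : p.[0] = Re (\det A) by rewrite p_horner scale0r expr0n /= scale0r !addr0.
have -> : (fun t : R => logdet (A + t%:C *: B + t%:C ^+ 2 *: C)) = (fun t => ln p.[t]).
  by apply/funext => t; rewrite p_horner.
apply: is_derive_eq; first by apply: is_derive_ln_horner; rewrite p0 -ltcR -detA_real.
have detA_neq0 : Re (\det A) != 0 by rewrite gt_eqF // -ltcR -detA_real.
by rewrite coef_map /= coef1_det_quad_pencil // p0 {1}detA_real Re_realM /= mulrAC mulfV ?mul1r.
Qed.

Lemma is_derive_logdet_gram m n (sig : R) (H E : 'M[R[i]]_(m, n)) (Wb : 'M[R[i]]_n) :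
  0 < sig -> ctrmx Wb = Wb -> psdmx Wb ->
  is_derive (0 : R) (1 : R)
    (fun t : R => logdet (sig%:C%:M + (H + t%:C *: E) *m Wb *m ctrmx (H + t%:C *: E)))
    (2 * Re (\tr (invmx (H *m Wb *m ctrmx H + sig%:C%:M) *m H *m Wb *m ctrmx E))).
Proof.
move=> sig_gt0 Wb_herm Wb_psd.
have HWH_herm : ctrmx (H *m Wb *m ctrmx H) = H *m Wb *m ctrmx H.
  by rewrite !ctrmxM ctrmxK Wb_herm mulmxA.
set A := H *m Wb *m ctrmx H + sig%:C%:M.
have A_herm : ctrmx A = A by rewrite ctrmxD HWH_herm ctrmx_scalar conjc_real.
have detA_gt0 : 0 < \det A.
  by rewrite /A addrC; apply: det_add_scalar_psd_gt0 => //; apply: psdmx_congr.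
have -> : (fun t : R => logdet (sig%:C%:M + (H + t%:C *: E) *m Wb *m ctrmx (H + t%:C *: E)))
    = fun t : R => logdet (A + t%:C *: (E *m Wb *m ctrmx H + H *m Wb *m ctrmx E)
                             + t%:C ^+ 2 *: (E *m Wb *m ctrmx E)).
  by apply/funext => t; rewrite gram_line_expand [sig%:C%:M + _]addrC.
apply: is_derive_eq; first exact: is_derive_logdet_quad.
(* The two first-order terms are conjugate to each other since [A] is Hermitian. *)
rewrite mulmxDr mxtraceD raddfD /= -!mulmxA.
have -> : \tr (invmx A *m (E *m (Wb *m ctrmx H)))
          = conjc (\tr (invmx A *m (H *m (Wb *m ctrmx E)))).
  by rewrite -mxtrace_ctrmx !ctrmxM ctrmxK Wb_herm ctrmx_inv A_herm mxtrace_mulC !mulmxA.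
by rewrite Re_conjc mulr_natl mulr2n.
Qed.

End LogdetDerivative.

Section WeightedSumRate.
Variables (R : realType) (K Nr Ns Nt Nd : nat).
Variables (G : 'M[R[i]]_(Ns, Nt)) (U : 'I_K -> 'M[R[i]]_(Nr, Ns)).
Variables (D : 'I_K -> 'M[R[i]]_(Nr, Nt)) (W : 'I_K -> 'M[R[i]]_(Nt, Nd)).
Variables (sigma2 : R) (omega : 'I_K -> R) (th : 'cV[R[i]]_Ns) (i : 'I_Ns).
Hypothesis sigma2_gt0 : 0 < sigma2.
Local Open Scope complex_scope.
Local Notation H k := (Hk (D k) (U k) G th).

Definition WSR_grad : 'cV[R[i]]_Ns :=
  \sum_(k < K) (omega k)%:C *:
    (vecd (ctrmx (U k) *m invmx (H k *m Wbar W *m ctrmx (H k) + sigma2%:C%:M)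
             *m H k *m Wbar W *m ctrmx G)
   - vecd (ctrmx (U k) *m invmx (H k *m Wbark W k *m ctrmx (H k) + sigma2%:C%:M)
             *m H k *m Wbark W k *m ctrmx G)).

Lemma is_derive_logdet_Hk_ecv c k (S : 'M[R[i]]_Nt) : ctrmx S = S -> psdmx S ->
  is_derive (0 : R) (1 : R)
    (fun t : R => logdet (sigma2%:C%:M + Hk (D k) (U k) G (th + (t%:C * c) *: ecv i) *m S
                          *m ctrmx (Hk (D k) (U k) G (th + (t%:C * c) *: ecv i))))
    (2 * Re (conjc c * (ctrmx (U k) *m invmx (H k *m S *m ctrmx (H k) + sigma2%:C%:M)
                        *m H k *m S *m ctrmx G) i i)).
Proof.
move=> S_herm S_psd.
under eq_fun do rewrite -scalerA Hk_shift.
apply: is_derive_eq; first exact: is_derive_logdet_gram.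
by rewrite -mxtrace_mul_ctr_diag_ecv !ctrmxM !mulmxA mxtrace_mulC !mulmxA.
Qed.

Lemma is_derive_WSR_ecv c :
  is_derive (0 : R) (1 : R) (fun t : R => WSR G U D W sigma2 omega (th + (t%:C * c) *: ecv i))
    (2 * Re (conjc c * WSR_grad i 0)).
Proof.
pose Ht t k := Hk (D k) (U k) G (th + (t%:C * c) *: ecv i).
pose F k t := omega k * (logdet (sigma2%:C%:M + Ht t k *m Wbar W *m ctrmx (Ht t k))
                         - logdet (sigma2%:C%:M + Ht t k *m Wbark W k *m ctrmx (Ht t k))).
have -> : (fun t : R => WSR G U D W sigma2 omega (th + (t%:C * c) *: ecv i)) = \sum_k F k.
  by rewrite fct_sumE.
apply: is_derive_eq.
  apply: is_derive_sum => k; apply: is_deriveZ; apply: is_deriveB;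
    apply: is_derive_logdet_Hk_ecv; by [exact: ctrmx_sum_gram | exact: psdmx_sum_gram].
rewrite /WSR_grad summxE mulr_sumr raddf_sum mulr_sumr; apply: eq_bigr => k _.
move: (ctrmx (U k) *m _ *m _ *m _ *m ctrmx G) (ctrmx (U k) *m _ *m _ *m _ *m ctrmx G) => X Y.
rewrite !mxE /= mulrCA Re_realM [in RHS]mulrBr ReB.
rewrite -[omega k *: _]/(omega k * _); ring.
Qed.

End WeightedSumRate.

Lemma complex_gradient_of_partials (R : realType) n (f : 'cV[R[i]]_n -> R)
    (th : 'cV[R[i]]_n) (i : 'I_n) (z : R[i]) :
  is_derive (0 : R) (1 : R) (dRe f th i) (2 * Re z) ->
  is_derive (0 : R) (1 : R) (dIm f th i) (2 * Im z) ->
  [/\ derivable (dRe f th i) 0 1, derivable (dIm f th i) 0 1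
    & (((2 : R)^-1)%:C)%C * (((derive1 (dRe f th i) 0)%:C)%C + 'i%C * ((derive1 (dIm f th i) 0)%:C)%C)
      = z].
Proof.
move=> dRe_f dIm_f; split; [exact: ex_derive | exact: ex_derive |].
by rewrite !derive1E !derive_val wirtinger_combination.
Qed.

Theorem theorem3 (R : realType) (K Nr Ns Nt Nd : nat)
  (G : 'M[R[i]]_(Ns, Nt)) (U : 'I_K -> 'M[R[i]]_(Nr, Ns))
  (D : 'I_K -> 'M[R[i]]_(Nr, Nt)) (W : 'I_K -> 'M[R[i]]_(Nt, Nd))
  (sigma2 : R) (omega : 'I_K -> R) (hsigma : 0 < sigma2)
  (th : 'cV[R[i]]_Ns) (i : 'I_Ns) :
  let f := WSR G U D W sigma2 omega in
  let gradR : 'cV[R[i]]_Ns :=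
    \sum_(k < K) ((omega k)%:C)%C *:
      (vecd (ctrmx (U k)
              *m invmx (Hk (D k) (U k) G th *m Wbar W *m ctrmx (Hk (D k) (U k) G th)
                        + (sigma2%:C)%C%:M)
              *m Hk (D k) (U k) G th *m Wbar W *m ctrmx G)
     - vecd (ctrmx (U k)
              *m invmx (Hk (D k) (U k) G th *m Wbark W k *m ctrmx (Hk (D k) (U k) G th)
                        + (sigma2%:C)%C%:M)
              *m Hk (D k) (U k) G th *m Wbark W k *m ctrmx G)) in
  [/\ derivable (dRe f th i) 0 1, derivable (dIm f th i) 0 1
    & (((2 : R)^-1)%:C)%C * (((derive1 (dRe f th i) 0)%:C)%C + 'i%C * ((derive1 (dIm f th i) 0)%:C)%C)
      = gradR i 0].
Proof.
move=> f gradR; rewrite {}/gradR -/(WSR_grad G U D W sigma2 omega th).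
apply: complex_gradient_of_partials.
- have -> : dRe f th i = fun t : R => f (th + ((t%:C)%C * 1) *: ecv i).
    by apply/funext => t; rewrite mulr1.
  apply: is_derive_eq; first exact: is_derive_WSR_ecv.
  by rewrite rmorph1 mul1r.
- rewrite -Re_conjci_mul; exact: is_derive_WSR_ecv.
Qed.
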